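(* Let $\mathcal{B}$ be a real Banach space, $\mathcal{P}$ a cone over $\mathcal{B}$ with induced partial order $\preceq$, let $\mathcal{Q}$ be a real vector space and $d$ a quasi-cone metric on $\mathcal{Q}$ with values in $\mathcal{B}$. Let $H$ be a non-empty subset of $\mathcal{Q}$. Then $H$ is a forward pseudo Chebyshev subset of $\mathcal{Q}$ if and only if there do not exist $q\in\mathcal{Q}$, infinitely many linearly independent elements $\{h_n\}_{n\in\mathbb{N}}\subseteq H$, and a function $f:\mathcal{Q}\to\mathcal{B}$ such that for all $n\in\mathbb{N}$: $f(h_n)=d(q,h_n)$, $\{f(h)-f(h_n): h\in H\}\subseteq\mathcal{P}$, and $\{d(q,h)-f(h): h\in H\}\subseteq\mathcal{P}$.
   Context: A cone over a real Banach space $\mathcal{B}$ is a subset $\mathcal{P}\subseteq\mathcal{B}$ that is closed, $\mathcal{P}\neq\{0_\mathcal{B}\}$, satisfies $ax+by\in\mathcal{P}$ for all $x,y\in\mathcal{P}$ and $a,b\geq 0$, and such that $x\in\mathcal{P}$ and $-x\in\mathcal{P}$ imply $x=0_\mathcal{B}$. For $r,s\in\mathcal{B}$, $s\preceq r$ means $r-s\in\mathcal{P}$. A quasi-cone metric on a set $\mathcal{Q}$ is a map $d:\mathcal{Q}\times\mathcal{Q}\to\mathcal{B}$ such that for all $r,s,t\in\mathcal{Q}$: $d(r,s)\succeq 0_\mathcal{B}$; $d(r,s)=0_\mathcal{B}$ iff $r=s$; $d(r,t)\preceq d(r,s)+d(s,t)$. For non-empty $H\subseteq\mathcal{Q}$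 and $q\in\mathcal{Q}$, $\mathcal{P}_{H_f}(q)$ is the set of all $h_f\in H$ with $d(q,h_f)\preceq d(q,h)$ for all $h\in H$. A non-empty $H\subseteq\mathcal{Q}$ is a forward pseudo Chebyshev subset of $\mathcal{Q}$ if for every $q\in\mathcal{Q}$ the set $\mathcal{P}_{H_f}(q)$ does not contain infinitely many linearly independent elements. *)

From HB Require Import structures.
From mathcomp Require Import all_boot all_order all_algebra.
From mathcomp Require Import all_classical all_reals all_analysis.
Set Implicit Arguments. Unset Strict Implicit. Unset Printing Implicit Defensive.
Import Order.TTheory GRing.Theory Num.Theory.
Import numFieldNormedType.Exports.
Local Open Scope classical_set_scope.
Local Open Scope ring_scope.

Definition is_cone {R : realType} {B : completeNormedModType R} (P : set B) : Prop :=
  [/\ closed P,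
      P <> [set 0],
      (forall (x y : B) (a b : R), P x -> P y -> 0 <= a -> 0 <= b -> P (a *: x + b *: y))
    & (forall x : B, P x -> P (- x) -> x = 0)].

Definition cone_le {R : realType} {B : completeNormedModType R} (P : set B) (s r : B) : Prop :=
  P (r - s).

Definition is_quasi_cone_metric {R : realType} {B : completeNormedModType R}
  (P : set B) {Q : Type} (d : Q -> Q -> B) : Prop :=
  [/\ (forall r s, cone_le P 0 (d r s)),
      (forall r s, d r s = 0 <-> r = s)
    & (forall r s t, cone_le P (d r t) (d r s + d s t))].

Definition forward_best_approx {R : realType} {B : completeNormedModType R}
  (P : set B) {Q : Type} (d : Q -> Q -> B) (H : set Q) (q : Q) : set Q :=
  [set hf | H hf /\ forall h, H h -> cone_le P (d q hf) (d q h)].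

Definition lin_indep_seq {R : realType} {Q : lmodType R} (h : nat -> Q) : Prop :=
  forall (n : nat) (c : nat -> R),
    \sum_(i < n) c i *: h i = 0 -> forall i, (i < n)%N -> c i = 0.

Definition has_inf_lin_indep {R : realType} {Q : lmodType R} (S : set Q) : Prop :=
  exists h : nat -> Q, lin_indep_seq h /\ forall n, S (h n).

Definition forward_pseudo_chebyshev {R : realType} {B : completeNormedModType R}
  (P : set B) {Q : lmodType R} (d : Q -> Q -> B) (H : set Q) : Prop :=
  H !=set0 /\ forall q : Q, ~ has_inf_lin_indep (forward_best_approx P d H q).

From HB Require Import structures.
From mathcomp Require Import all_boot all_order all_algebra.
From mathcomp Require Import all_classical all_reals all_analysis.
Import Order.TTheory GRing.Theory Num.Theory.
Import numFieldNormedType.Exports.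
Local Open Scope classical_set_scope.
Local Open Scope ring_scope.

(* A point h_n of H is a forward best approximation to q exactly when some
   f : Q -> B touches d(q, .) at h_n, is minimised on H at h_n and lies below
   d(q, .) on H: one direction chains d(q, h_n) = f(h_n) <= f(h) <= d(q, h)
   by transitivity of the cone order, the other takes f := d(q, .). *)

Section ConeOrder.

Context {R : realType} {B : completeNormedModType R} {P : set B}.
Hypothesis P_cone : is_cone P.

Lemma is_cone_addr (x y : B) : P x -> P y -> P (x + y).
Proof.
case: P_cone => _ _ P_comb _ Px Py.
by have := P_comb _ _ 1 1 Px Py ler01 ler01; rewrite !scale1r.
Qed.

Lemma cone_le_trans {s t r : B} :
  cone_le P s t -> cone_le P t r -> cone_le P s r.
Proof.
move=> le_st le_tr; rewrite /cone_le.
have -> : r - s = (t - s) + (r - t) by rewrite [RHS]addrC addrA subrK.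
exact: is_cone_addr.
Qed.

Lemma cone_subrr {a : B} (x : B) : P a -> P (x - x).
Proof.
case: P_cone => _ _ P_comb _ Pa; rewrite subrr.
by have := P_comb _ _ 0 0 Pa Pa (lexx 0) (lexx 0); rewrite !scale0r addr0.
Qed.

Lemma forward_best_approx_of_minorant {Q : Type} {d : Q -> Q -> B}
    {H : set Q} {q y : Q} {f : Q -> B} :
  H y -> f y = d q y ->
  (forall x, H x -> cone_le P (f y) (f x)) ->
  (forall x, H x -> cone_le P (f x) (d q x)) ->
  forward_best_approx P d H q y.
Proof.
move=> Hy fy_eq f_min f_le_d; split=> // x Hx.
by rewrite -fy_eq; exact: cone_le_trans (f_min x Hx) (f_le_d x Hx).
Qed.

End ConeOrder.

Theorem theorem7 (R : realType) (B : completeNormedModType R) (P : set B)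
  (Q : lmodType R) (d : Q -> Q -> B) (H : set Q) :
  is_cone P -> is_quasi_cone_metric P d -> H !=set0 ->
  (forward_pseudo_chebyshev P d H <->
   ~ (exists (q : Q) (h : nat -> Q) (f : Q -> B),
        lin_indep_seq h /\ (forall n, H (h n)) /\
        forall n, [/\ f (h n) = d q (h n),
                     (forall x, H x -> P (f x - f (h n)))
                   & (forall x, H x -> P (d q x - f x))])).
Proof.
move=> P_cone [d_ge0 _ _] H_neq0; split.
- move=> [_ no_indep] [q [h [f [h_indep [hH f_minorant]]]]].
  apply: (no_indep q); exists h; split=> // n.
  have [fh_eq f_min f_le_d] := f_minorant n.
  exact (forward_best_approx_of_minorant P_cone (hH n) fh_eq f_min f_le_d).
- move=> no_minorant; split=> // q [h [h_indep h_best]].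
  apply: no_minorant; exists q, h, (d q); split=> //; split.
    by move=> n; case: (h_best n).
  move=> n; split=> // x Hx; first by case: (h_best n) => _; apply.
  exact (cone_subrr P_cone (d q x) (d_ge0 q q)).
Qed.
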